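(* Let $\mathcal{A}$ be a complex Banach algebra with identity, let $\lambda$ be a nonzero complex number, and let $a \in \mathcal{A}^{qnil}$ and $b \in \mathcal{A}^d$. If $$ab = \lambda\, b a b^\pi,$$ then $a + b \in \mathcal{A}^d$ and $$(a + b)^d = b^d + \sum_{n=0}^{\infty} (b^d)^{n+2} a (a + b)^n,$$ where the series converges.
   Context: For $x\in\mathcal{A}$, $\mathrm{comm}(x)=\{y\in\mathcal{A}: xy=yx\}$. $\mathcal{A}^{qnil}$ is the set of quasinilpotent elements of $\mathcal{A}$, i.e. those $x$ with $\lim_{n\to\infty}\|x^n\|^{1/n}=0$. An element $x\in\mathcal{A}$ has a generalized Drazin (g-Drazin) inverse if there is $y \in \mathrm{comm}(x)$ with $y = yxy$ and $x - x^2y \in \mathcal{A}^{qnil}$; such $y$ is unique and denoted $x^d$. $\mathcal{A}^d$ denotes the set of g-Drazin invertible elements. The spectral idempotent of $x\in\mathcal{A}^d$ is $x^\pi = 1 - xx^d$. *)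

From Stdlib Require Import Reals.
Open Scope R_scope.
Set Implicit Arguments.

Definition Cplx : Type := (R * R)%type.
Definition C0 : Cplx := (0, 0).
Definition C1 : Cplx := (1, 0).
Definition Cplus (z w : Cplx) : Cplx := (fst z + fst w, snd z + snd w).
Definition Cmult (z w : Cplx) : Cplx :=
  (fst z * fst w - snd z * snd w, fst z * snd w + snd z * fst w).
Definition Cmod (z : Cplx) : R := sqrt (fst z ^ 2 + snd z ^ 2).

Record BanachAlgebra : Type := {
  car :> Type;
  bzero : car;
  bone : car;
  badd : car -> car -> car;
  bopp : car -> car;
  bmul : car -> car -> car;
  bscal : Cplx -> car -> car;
  bnorm : car -> R;
  badd_assoc : forall x y z, badd x (badd y z) = badd (badd x y) z;
  badd_comm : forall x y, badd x y = badd y x;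
  badd_0l : forall x, badd bzero x = x;
  badd_oppr : forall x, badd x (bopp x) = bzero;
  bmul_assoc : forall x y z, bmul x (bmul y z) = bmul (bmul x y) z;
  bmul_1l : forall x, bmul bone x = x;
  bmul_1r : forall x, bmul x bone = x;
  bmul_addl : forall x y z, bmul (badd x y) z = badd (bmul x z) (bmul y z);
  bmul_addr : forall x y z, bmul x (badd y z) = badd (bmul x y) (bmul x z);
  bscal_1 : forall x, bscal C1 x = x;
  bscal_assoc : forall c d x, bscal c (bscal d x) = bscal (Cmult c d) x;
  bscal_addC : forall c d x, bscal (Cplus c d) x = badd (bscal c x) (bscal d x);
  bscal_addV : forall c x y, bscal c (badd x y) = badd (bscal c x) (bscal c y);
  bscal_mull : forall c x y, bscal c (bmul x y) = bmul (bscal c x) y;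
  bscal_mulr : forall c x y, bscal c (bmul x y) = bmul x (bscal c y);
  bnorm_ge0 : forall x, 0 <= bnorm x;
  bnorm_eq0 : forall x, bnorm x = 0 -> x = bzero;
  bnorm_triangle : forall x y, bnorm (badd x y) <= bnorm x + bnorm y;
  bnorm_scal : forall c x, bnorm (bscal c x) = Cmod c * bnorm x;
  bnorm_submult : forall x y, bnorm (bmul x y) <= bnorm x * bnorm y;
  bcomplete : forall u : nat -> car,
    (forall eps, 0 < eps -> exists N, forall m n, (N <= m)%nat -> (N <= n)%nat ->
        bnorm (badd (u m) (bopp (u n))) < eps) ->
    exists l, forall eps, 0 < eps -> exists N, forall n, (N <= n)%nat ->
        bnorm (badd (u n) (bopp l)) < eps
}.

Arguments bzero {b}.
Arguments bone {b}.

Section Ops.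
Context {A : BanachAlgebra}.

Definition bsub (x y : A) : A := badd A x (bopp A y).

Fixpoint bpow (x : A) (n : nat) : A :=
  match n with O => bone | S n => bmul A x (bpow x n) end.

Definition bconverges (u : nat -> A) (l : A) : Prop :=
  forall eps, 0 < eps -> exists N, forall n, (N <= n)%nat -> bnorm A (bsub (u n) l) < eps.

(* partial sums  sum_{k=0}^{n-1} f k *)
Fixpoint bpartial (f : nat -> A) (n : nat) : A :=
  match n with O => bzero | S n => badd A (bpartial f n) (f n) end.

Definition bseries_sum (f : nat -> A) (s : A) : Prop := bconverges (bpartial f) s.

(* nonnegative n-th root, with the convention root of 0 = 0 *)
Definition nthroot (r : R) (n : nat) : R :=
  if Rle_dec r 0 then 0 else Rpower r (/ INR n).

Definition qnil (x : A) : Prop := Un_cv (fun n => nthroot (bnorm A (bpow x n)) n) 0.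

Definition commutes (x y : A) : Prop := bmul A x y = bmul A y x.

Definition is_gdrazin (x y : A) : Prop :=
  commutes x y /\ y = bmul A y (bmul A x y) /\ qnil (bsub x (bmul A (bpow x 2) y)).

Definition gdrazin_invertible (x : A) : Prop := exists y, is_gdrazin x y.

(* spectral idempotent x^pi = 1 - x x^d, given the g-Drazin inverse xd *)
Definition spectral_idem (x xd : A) : A := bsub bone (bmul A x xd).

End Ops.

From Pilot Require Import Defs.
From Stdlib Require Import Reals Lra Lia.
From Stdlib Require Import Ncring Ncring_tac.
Open Scope R_scope.

(* Let e = b b^d and p = b^pi = 1 - e.  The hypothesis forces a e = 0, hence a p = a
   and p (a + b) = c with c = p a + b p.  Both summands of c are quasinilpotent and they
   quasi-commute, (p a)(b p) = lam (b p)(p a); expanding (u + v)^n and moving every v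
   to the left only introduces scalars lam^k (or lam^-k after swapping u and v) of
   modulus at most one, so c is quasinilpotent.  As a (a + b)^n = a c^n p, the n-th
   term of the series is bounded by |b^d|^(n+2) |c^n|, which decays faster than any
   geometric sequence, so the series converges to some s.  Then y = b^d + s commutes
   with a + b, y = y (a + b) y, and (a + b) - (a + b)^2 y = c - r with c r = r^2 = 0,
   which is quasinilpotent because (c - r)^(n+1) = c^(n+1) - r c^n. *)

Definition Cinv (z : Cplx) : Cplx :=
  (fst z / (fst z ^ 2 + snd z ^ 2), - snd z / (fst z ^ 2 + snd z ^ 2)).

Lemma Cnorm2_pos (z : Cplx) : z <> C0 -> 0 < fst z ^ 2 + snd z ^ 2.
Proof.
  intros Hz. destruct z as [x y]; simpl.
  assert (x ^ 2 + y ^ 2 <> 0).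
  { rewrite <- !Rsqr_pow2. intros H0. apply Hz.
    destruct (Rplus_sqr_eq_0 _ _ H0). now subst. }
  nra.
Qed.

Lemma Cmult_Cinv_l (z : Cplx) : z <> C0 -> Cmult (Cinv z) z = Defs.C1.
Proof.
  intros Hz. pose proof (Cnorm2_pos z Hz).
  destruct z as [x y]. unfold Cmult, Cinv, Defs.C1; simpl in *. f_equal; field; lra.
Qed.

Lemma Cmod_Cinv (z : Cplx) : z <> C0 -> Cmod (Cinv z) = / Cmod z.
Proof.
  intros Hz. pose proof (Cnorm2_pos z Hz).
  destruct z as [x y]. unfold Cmod, Cinv; simpl in *. rewrite <- sqrt_inv. f_equal. field. lra.
Qed.

Lemma Cmod_Cinv_le1 (z : Cplx) : z <> C0 -> 1 < Cmod z -> Cmod (Cinv z) <= 1.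
Proof.
  intros Hz H1. rewrite Cmod_Cinv by exact Hz. rewrite <- Rinv_1.
  apply Rinv_le_contravar; lra.
Qed.

Lemma finite_upper_bound (g : nat -> R) M : exists K, forall n, (n < M)%nat -> g n <= K.
Proof.
  induction M as [|M [K HK]]; [exists 0; intros; lia|].
  exists (Rmax K (g M)). intros n Hn.
  destruct (Nat.eq_dec n M) as [->|]; [apply Rmax_r|].
  eapply Rle_trans; [apply HK; lia | apply Rmax_l].
Qed.

Section BanachAlgebraTheory.
Variable A : BanachAlgebra.

#[local] Instance bring_ops : @Ring_ops (car A) bzero bone (badd A) (bmul A) (@bsub A) (bopp A) eq := {}.
#[local] Instance bring : Ring (Ro := bring_ops).
Proof.
  constructor; try exact _; intros; simpl.
  all: try apply badd_0l; try apply badd_comm; try apply badd_assoc; try apply bmul_1l;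
    try apply bmul_1r; try apply bmul_assoc; try apply bmul_addl; try apply bmul_addr;
    try reflexivity; try apply badd_oppr.
Qed.

Local Ltac nr := non_commutative_ring.

Local Notation "x ** y" := (bmul A x y) (at level 40, left associativity).
Local Notation "x +++ y" := (badd A x y) (at level 50, left associativity).
Local Notation "x --- y" := (bsub x y) (at level 50, left associativity).
Local Notation nrm := (bnorm A).

Lemma bsub_eq0 (x y : A) : x --- y = bzero -> x = y.
Proof. intros H. transitivity ((x --- y) +++ y); [nr|]. rewrite H. nr. Qed.

Lemma bscal0 c : bscal A c (bzero : A) = bzero.
Proof.
  assert (H : bscal A c (bzero +++ bzero) = bscal A c bzero +++ bscal A c bzero)
    by apply bscal_addV.
  replace (bzero +++ bzero) with (bzero : A) in H by nr.
  transitivity (bscal A c bzero +++ bscal A c bzero --- bscal A c bzero); [nr|].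
  rewrite <- H. nr.
Qed.

Lemma bscal_C0 (z : A) : bscal A C0 z = bzero.
Proof.
  assert (H : bscal A (Cplus C0 C0) z = bscal A C0 z +++ bscal A C0 z) by apply bscal_addC.
  replace (Cplus C0 C0) with C0 in H by (unfold Cplus, C0; simpl; f_equal; ring).
  transitivity (bscal A C0 z +++ bscal A C0 z --- bscal A C0 z); [nr|].
  rewrite <- H. nr.
Qed.

Lemma bscal_opp1 (z : A) : bscal A (-1, 0) z = bopp A z.
Proof.
  apply bsub_eq0.
  assert (H : bscal A (Cplus (-1, 0) Defs.C1) z = bscal A (-1, 0) z +++ bscal A Defs.C1 z)
    by apply bscal_addC.
  replace (Cplus (-1, 0) Defs.C1) with C0 in H by (unfold Cplus, C0, Defs.C1; simpl; f_equal; ring).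
  rewrite bscal_C0, bscal_1 in H.
  transitivity (bscal A (-1, 0) z +++ z); [nr|]. now rewrite <- H.
Qed.

Lemma bnorm_opp (z : A) : nrm (bopp A z) = nrm z.
Proof.
  rewrite <- bscal_opp1, bnorm_scal.
  unfold Cmod; simpl. replace (-1 * (-1 * 1) + 0 * (0 * 1)) with 1 by ring.
  rewrite sqrt_1. ring.
Qed.

Lemma bnorm_sub_sym (x y : A) : nrm (x --- y) = nrm (y --- x).
Proof. replace (x --- y) with (bopp A (y --- x)) by nr. apply bnorm_opp. Qed.

Lemma bnorm0 : nrm (bzero : A) = 0.
Proof.
  rewrite <- (bscal_C0 bzero), bnorm_scal.
  unfold Cmod, C0; simpl. replace (0 * (0 * 1) + 0 * (0 * 1)) with 0 by ring.
  rewrite sqrt_0. ring.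
Qed.

Lemma bpow_Sr (x : A) n : bpow x (S n) = bpow x n ** x.
Proof.
  induction n; simpl; [nr|]. simpl in IHn.
  transitivity (x ** (bpow x n ** x)); [now rewrite <- IHn | nr].
Qed.

Lemma bnorm_pow (x : A) n : nrm (bpow x n) <= nrm bone * nrm x ^ n.
Proof.
  induction n; simpl; [lra|].
  eapply Rle_trans; [apply bnorm_submult|].
  pose proof (bnorm_ge0 A x).
  replace (nrm bone * (nrm x * nrm x ^ n)) with (nrm x * (nrm bone * nrm x ^ n)) by ring.
  now apply Rmult_le_compat_l.
Qed.

Lemma bnorm_mul3 (x y z : A) : nrm (x ** y ** z) <= nrm x * nrm y * nrm z.
Proof.
  eapply Rle_trans; [apply bnorm_submult|].
  apply Rmult_le_compat_r; [apply bnorm_ge0 | apply bnorm_submult].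
Qed.


Definition qnil_geom (x : A) : Prop :=
  forall eps, 0 < eps -> exists K, forall n, nrm (bpow x n) <= K * eps ^ n.

Lemma geom_bound_ge0 (x : A) eps K : (forall n, nrm (bpow x n) <= K * eps ^ n) -> 0 <= K.
Proof. intros H. specialize (H O). simpl in H. pose proof (bnorm_ge0 A bone). lra. Qed.

Lemma qnil_geom_of_qnil (x : A) : qnil x -> qnil_geom x.
Proof.
  intros Hq eps Heps.
  destruct (Hq eps Heps) as [N HN].
  destruct (finite_upper_bound (fun n => nrm (bpow x n) / eps ^ n) (S N)) as [K HK].
  exists (Rmax K 1). intros n.
  assert (Hp : 0 < eps ^ n) by (apply pow_lt; lra).
  destruct (Compare_dec.le_lt_dec n N) as [Hle | Hlt].
  - specialize (HK n ltac:(lia)). simpl in HK.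
    apply Rle_trans with (K * eps ^ n).
    + apply (Rmult_le_compat_r (eps ^ n)) in HK; [|lra].
      unfold Rdiv in HK. rewrite Rmult_assoc, Rinv_l, Rmult_1_r in HK; lra.
    + apply Rmult_le_compat_r; [lra | apply Rmax_l].
  - specialize (HN n ltac:(lia)). unfold R_dist, nthroot in HN.
    rewrite Rminus_0_r in HN.
    apply Rle_trans with (eps ^ n).
    2: { rewrite <- (Rmult_1_l (eps ^ n)) at 1.
         apply Rmult_le_compat_r; [lra | apply Rmax_r]. }
    destruct (Rle_dec (nrm (bpow x n)) 0) as [H0|H0]; [lra|].
    apply Rlt_le. unfold Rpower in HN.
    rewrite Rabs_right in HN by (left; apply exp_pos).
    rewrite <- (exp_ln eps) in HN by lra.
    apply exp_lt_inv in HN.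
    assert (Hn : 0 < INR n) by (apply lt_0_INR; lia).
    assert (Hln : ln (nrm (bpow x n)) < INR n * ln eps).
    { apply Rmult_lt_compat_l with (r := INR n) in HN; auto.
      rewrite <- Rmult_assoc, Rinv_r, Rmult_1_l in HN; lra. }
    rewrite <- ln_pow in Hln by lra.
    rewrite <- (exp_ln (nrm (bpow x n))), <- (exp_ln (eps ^ n)) by lra.
    now apply exp_increasing.
Qed.

Lemma qnil_of_qnil_geom (x : A) : qnil_geom x -> qnil x.
Proof.
  intros Hs eps Heps.
  destruct (Hs (eps / 2) ltac:(lra)) as [K HK].
  destruct (Pow_x_infinity 2 ltac:(rewrite Rabs_right; lra) (K + 1)) as [N HN].
  exists (S N). intros n Hn.
  unfold R_dist, nthroot. rewrite Rminus_0_r.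
  destruct (Rle_dec (nrm (bpow x n)) 0) as [H0|H0]; [rewrite Rabs_R0; lra|].
  unfold Rpower. rewrite Rabs_right by (left; apply exp_pos).
  specialize (HN n ltac:(lia)). rewrite Rabs_right in HN by (left; apply pow_lt; lra).
  assert (Hlt : nrm (bpow x n) < eps ^ n).
  { eapply Rle_lt_trans; [apply HK|].
    unfold Rdiv. rewrite Rpow_mult_distr, pow_inv.
    assert (0 < eps ^ n) by (apply pow_lt; lra).
    assert (0 < 2 ^ n) by (apply pow_lt; lra).
    replace (K * (eps ^ n * / 2 ^ n)) with ((K / 2 ^ n) * eps ^ n) by (field; lra).
    rewrite <- (Rmult_1_l (eps ^ n)) at 2. apply Rmult_lt_compat_r; auto.
    apply Rmult_lt_reg_r with (2 ^ n); auto.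
    unfold Rdiv. rewrite Rmult_assoc, Rinv_l; lra. }
  assert (Hn0 : 0 < INR n) by (apply lt_0_INR; lia).
  rewrite <- (exp_ln eps) by lra. apply exp_increasing.
  apply ln_increasing in Hlt; [| lra]. rewrite ln_pow in Hlt by lra.
  apply Rmult_lt_reg_l with (INR n); auto.
  rewrite <- Rmult_assoc, Rinv_r, Rmult_1_l; lra.
Qed.

Lemma qnil_geom_dominated (x y : A) K0 : 0 <= K0 ->
  (forall n, nrm (bpow y (S n)) <= K0 * (nrm (bpow x (S n)) + nrm (bpow x n))) ->
  qnil_geom x -> qnil_geom y.
Proof.
  intros HK0 Hb Hs eps Heps.
  destruct (Hs eps Heps) as [K HK].
  pose proof (geom_bound_ge0 _ _ _ HK) as HKp.
  exists (Rmax (nrm bone) (K0 * K * (1 + / eps))). intros [|n].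
  - simpl. rewrite Rmult_1_r. apply Rmax_l.
  - eapply Rle_trans; [apply Hb|].
    apply Rle_trans with (K0 * (K * eps ^ S n + K * eps ^ n)).
    { apply Rmult_le_compat_l; auto. apply Rplus_le_compat; apply HK. }
    apply Rle_trans with (K0 * K * (1 + / eps) * eps ^ S n).
    { right. simpl. field. lra. }
    apply Rmult_le_compat_r; [apply pow_le; lra | apply Rmax_r].
Qed.


Fixpoint scal_iter (mu : Cplx) (k : nat) (z : A) : A :=
  match k with O => z | S k => bscal A mu (scal_iter mu k z) end.

Lemma bnorm_scal_iter mu k (z : A) : Cmod mu <= 1 -> nrm (scal_iter mu k z) <= nrm z.
Proof.
  intros Hm. induction k; simpl; [lra|].
  rewrite bnorm_scal. pose proof (bnorm_ge0 A (scal_iter mu k z)).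
  pose proof (sqrt_pos (fst mu ^ 2 + snd mu ^ 2)). unfold Cmod in *. nra.
Qed.

Lemma scal_iter_mull mu k (x y : A) : scal_iter mu k x ** y = scal_iter mu k (x ** y).
Proof. induction k; simpl; auto. now rewrite <- bscal_mull, IHk. Qed.

Lemma scal_iter_mulr mu k (x y : A) : x ** scal_iter mu k y = scal_iter mu k (x ** y).
Proof. induction k; simpl; auto. now rewrite <- bscal_mulr, IHk. Qed.

Lemma scal_iter_S mu k (z : A) : scal_iter mu (S k) z = scal_iter mu k (bscal A mu z).
Proof. induction k; simpl; auto. simpl in IHk. now rewrite IHk. Qed.

Lemma bpow_qcomm (u v : A) mu : u ** v = bscal A mu (v ** u) ->
  forall k, bpow u k ** v = scal_iter mu k (v ** bpow u k).
Proof.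
  intros H k. induction k; simpl; [nr|].
  transitivity (u ** (bpow u k ** v)); [nr|]. rewrite IHk, scal_iter_mulr.
  transitivity (scal_iter mu k (u ** v ** bpow u k)); [f_equal; nr|].
  rewrite H, <- bscal_mull, <- scal_iter_S, <- bmul_assoc. reflexivity.
Qed.

(* Expanding [(u + v)^n] and moving every [v] to the left multiplies each of the
   [2^n] words by scalars of modulus at most one, so a word with [j] factors [v]
   and [k] factors [u] up front is bounded by [2^n Kv Ku (eps/2)^(j+k+n)]. *)
Lemma qnil_geom_add_qcomm_contr (u v : A) mu : Cmod mu <= 1 ->
  u ** v = bscal A mu (v ** u) -> qnil_geom u -> qnil_geom v -> qnil_geom (u +++ v).
Proof.
  intros Hm Huv Hu Hv eps Heps.
  destruct (Hu (eps/2) ltac:(lra)) as [Ku HKu].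
  destruct (Hv (eps/2) ltac:(lra)) as [Kv HKv].
  pose proof (geom_bound_ge0 _ _ _ HKu). pose proof (geom_bound_ge0 _ _ _ HKv).
  assert (Hword : forall n j k, nrm (bpow v j ** (bpow u k ** bpow (u +++ v) n))
     <= 2 ^ n * Kv * Ku * (eps/2) ^ (j + k + n)).
  { induction n; intros j k.
    - simpl. rewrite bmul_1r, Nat.add_0_r, pow_add.
      eapply Rle_trans; [apply bnorm_submult|].
      replace (1 * Kv * Ku * ((eps / 2) ^ j * (eps / 2) ^ k)) with
        ((Kv * (eps/2)^j) * (Ku * (eps/2)^k)) by ring.
      apply Rmult_le_compat; try apply bnorm_ge0; auto.
    - assert (E : bpow v j ** (bpow u k ** bpow (u +++ v) (S n)) =
        bpow v j ** (bpow u (S k) ** bpow (u +++ v) n) +++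
        scal_iter mu k (bpow v (S j) ** (bpow u k ** bpow (u +++ v) n))).
      { transitivity (bpow v j ** (bpow u (S k) ** bpow (u +++ v) n) +++
           bpow v j ** ((bpow u k ** v) ** bpow (u +++ v) n)).
        { rewrite (bpow_Sr u k). simpl. nr. }
        f_equal. rewrite (bpow_qcomm u v mu Huv k), scal_iter_mull, scal_iter_mulr.
        f_equal. rewrite (bpow_Sr v j). nr. }
      rewrite E. eapply Rle_trans; [apply bnorm_triangle|].
      eapply Rle_trans.
      { apply Rplus_le_compat; [apply IHn|].
        eapply Rle_trans; [apply bnorm_scal_iter; auto | apply IHn]. }
      replace (j + S k + n)%nat with (j + k + S n)%nat by lia.
      replace (S j + k + n)%nat with (j + k + S n)%nat by lia.
      simpl. lra. }
  exists (Kv * Ku). intros n.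
  specialize (Hword n O O). simpl in Hword.
  replace (bone ** (bone ** bpow (u +++ v) n)) with (bpow (u +++ v) n) in Hword by nr.
  eapply Rle_trans; [apply Hword|]. right.
  unfold Rdiv. rewrite Rpow_mult_distr, pow_inv. field. apply pow_nonzero. lra.
Qed.

Lemma qnil_geom_add_qcomm (u v : A) lam : lam <> C0 ->
  u ** v = bscal A lam (v ** u) -> qnil_geom u -> qnil_geom v -> qnil_geom (u +++ v).
Proof.
  intros Hl Huv Hu Hv.
  destruct (Rle_dec (Cmod lam) 1) as [Hle | Hgt].
  - now apply qnil_geom_add_qcomm_contr with lam.
  - rewrite badd_comm. apply qnil_geom_add_qcomm_contr with (Cinv lam); auto.
    + apply Cmod_Cinv_le1; [exact Hl | lra].
    + rewrite Huv, bscal_assoc, Cmult_Cinv_l, bscal_1 by exact Hl. reflexivity.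
Qed.


Lemma bconverges_unique (u : nat -> A) l l' : bconverges u l -> bconverges u l' -> l = l'.
Proof.
  intros H1 H2. apply bsub_eq0, bnorm_eq0.
  apply Rle_antisym; [| apply bnorm_ge0].
  apply Rnot_lt_le. intros Hp.
  set (e := nrm (l --- l')) in *.
  destruct (H1 (e/2) ltac:(lra)) as [N1 HN1]. destruct (H2 (e/2) ltac:(lra)) as [N2 HN2].
  specialize (HN1 (N1 + N2)%nat ltac:(lia)). specialize (HN2 (N1 + N2)%nat ltac:(lia)).
  assert (Htri : e <= nrm (bopp A (u (N1 + N2)%nat --- l)) + nrm (u (N1 + N2)%nat --- l')).
  { unfold e.
    replace (l --- l') with (bopp A (u (N1 + N2)%nat --- l) +++ (u (N1 + N2)%nat --- l')) by nr.
    apply bnorm_triangle. }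
  rewrite bnorm_opp in Htri. lra.
Qed.

Lemma bconverges_lipschitz (F : A -> A) M (u : nat -> A) l : 0 <= M ->
  (forall x y, nrm (F x --- F y) <= M * nrm (x --- y)) ->
  bconverges u l -> bconverges (fun n => F (u n)) (F l).
Proof.
  intros HM HF H eps Heps.
  destruct (H (eps / (M + 1))) as [N HN]; [apply Rdiv_lt_0_compat; lra|].
  exists N. intros n Hn. specialize (HN n Hn).
  eapply Rle_lt_trans; [apply HF|].
  pose proof (bnorm_ge0 A (u n --- l)).
  apply Rle_lt_trans with ((M + 1) * nrm (u n --- l)); [nra|].
  apply Rmult_lt_compat_l with (r := M + 1) in HN; [|lra].
  replace ((M + 1) * (eps / (M + 1))) with eps in HN by (field; lra). exact HN.
Qed.

Lemma bconverges_mull (u : nat -> A) l z :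
  bconverges u l -> bconverges (fun n => z ** u n) (z ** l).
Proof.
  apply (bconverges_lipschitz (bmul A z) (nrm z)); [apply bnorm_ge0|].
  intros x y. replace (z ** x --- z ** y) with (z ** (x --- y)) by nr. apply bnorm_submult.
Qed.

Lemma bconverges_mulr (u : nat -> A) l z :
  bconverges u l -> bconverges (fun n => u n ** z) (l ** z).
Proof.
  apply (bconverges_lipschitz (fun x => x ** z) (nrm z)); [apply bnorm_ge0|].
  intros x y. replace (x ** z --- y ** z) with ((x --- y) ** z) by nr.
  rewrite Rmult_comm. apply bnorm_submult.
Qed.

Lemma bconverges_addl (u : nat -> A) l z :
  bconverges u l -> bconverges (fun n => z +++ u n) (z +++ l).
Proof.
  apply (bconverges_lipschitz (badd A z) 1); [lra|].
  intros x y. replace (z +++ x --- (z +++ y)) with (x --- y) by nr. lra.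
Qed.

Lemma bconverges_shift (u : nat -> A) l : bconverges u l -> bconverges (fun n => u (S n)) l.
Proof. intros H eps Heps. destruct (H eps Heps) as [N HN]. exists N. intros n Hn. apply HN. lia. Qed.

Lemma bconverges_ext (u v : nat -> A) l :
  (forall n, u n = v n) -> bconverges u l -> bconverges v l.
Proof.
  intros E H eps Heps. destruct (H eps Heps) as [N HN].
  exists N. intros n Hn. rewrite <- E. auto.
Qed.

Lemma bpartial_mull (f : nat -> A) z n : z ** bpartial f n = bpartial (fun k => z ** f k) n.
Proof. induction n; simpl; [nr|]. rewrite <- IHn. nr. Qed.

Lemma bpartial_mulr (f : nat -> A) z n : bpartial f n ** z = bpartial (fun k => f k ** z) n.
Proof. induction n; simpl; [nr|]. rewrite <- IHn. nr. Qed.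

Lemma bpartial_ext (f g : nat -> A) n : (forall k, f k = g k) -> bpartial f n = bpartial g n.
Proof. intros E; induction n; simpl; auto. now rewrite IHn, E. Qed.

Lemma bpartial_shift (f : nat -> A) n :
  bpartial f (S n) = f O +++ bpartial (fun k => f (S k)) n.
Proof. induction n; simpl; [nr|]. simpl in IHn. rewrite IHn. nr. Qed.

Lemma bseries_sum_unique (f : nat -> A) s s' : bseries_sum f s -> bseries_sum f s' -> s = s'.
Proof. apply bconverges_unique. Qed.

Lemma bseries_sum_ext (f g : nat -> A) s :
  (forall k, f k = g k) -> bseries_sum f s -> bseries_sum g s.
Proof. intros E. apply bconverges_ext. intros n. now apply bpartial_ext. Qed.

Lemma bseries_sum_mull (f : nat -> A) s z :
  bseries_sum f s -> bseries_sum (fun k => z ** f k) (z ** s).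
Proof.
  intros H. apply (bconverges_ext (fun n => z ** bpartial f n)).
  - intros n. apply bpartial_mull.
  - now apply bconverges_mull.
Qed.

Lemma bseries_sum_mulr (f : nat -> A) s z :
  bseries_sum f s -> bseries_sum (fun k => f k ** z) (s ** z).
Proof.
  intros H. apply (bconverges_ext (fun n => bpartial f n ** z)).
  - intros n. apply bpartial_mulr.
  - now apply bconverges_mulr.
Qed.

Lemma bpartial_tail_bound (f : nat -> A) C : (forall n, nrm (f n) <= C * (/2) ^ n) ->
  forall d n, nrm (bpartial f (n + d) --- bpartial f n) <= 2 * C * ((/2) ^ n - (/2) ^ (n + d)).
Proof.
  intros Hf d. induction d; intros n.
  - rewrite Nat.add_0_r. replace (bpartial f n --- bpartial f n) with (bzero : A) by nr.
    rewrite bnorm0. lra.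
  - replace (n + S d)%nat with (S (n + d)) by lia. simpl bpartial.
    replace (bpartial f (n + d)%nat +++ f (n + d)%nat --- bpartial f n) with
       ((bpartial f (n + d)%nat --- bpartial f n) +++ f (n + d)%nat) by nr.
    eapply Rle_trans; [apply bnorm_triangle|].
    eapply Rle_trans; [apply Rplus_le_compat; [apply IHd | apply Hf]|].
    right. simpl. field.
Qed.

Lemma bseries_geom (f : nat -> A) C : (forall n, nrm (f n) <= C * (/2) ^ n) ->
  exists s, bseries_sum f s.
Proof.
  intros Hf.
  assert (HC : 0 <= C).
  { specialize (Hf O). simpl in Hf. pose proof (bnorm_ge0 A (f O)). lra. }
  assert (Hd : forall m n, (n <= m)%nat ->
    nrm (bpartial f m --- bpartial f n) <= 2 * C * (/2) ^ n).
  { intros m n Hmn. replace m with (n + (m - n))%nat by lia.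
    eapply Rle_trans; [apply bpartial_tail_bound; auto|].
    assert (0 <= (/2) ^ (n + (m - n))) by (apply pow_le; lra). nra. }
  destruct (bcomplete A (bpartial f)) as [l Hl]; [|exists l; exact Hl].
  intros eps Heps.
  destruct (pow_lt_1_zero (/2) ltac:(rewrite Rabs_right; lra) (eps / (2 * C + 1))
     ltac:(apply Rdiv_lt_0_compat; lra)) as [N HN].
  assert (Hb : forall k, (N <= k)%nat -> 2 * C * (/2) ^ k < eps).
  { intros k Hk. specialize (HN k Hk).
    rewrite Rabs_right in HN by (apply Rle_ge, pow_le; lra).
    apply Rmult_lt_compat_l with (r := 2 * C + 1) in HN; [|lra].
    replace ((2 * C + 1) * (eps / (2 * C + 1))) with eps in HN by (field; lra).
    assert (0 <= (/2) ^ k) by (apply pow_le; lra). nra. }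
  exists N. intros m n Hm Hn.
  destruct (Compare_dec.le_ge_dec n m).
  - eapply Rle_lt_trans; [apply Hd; auto | apply Hb; auto].
  - fold (bsub (bpartial f m) (bpartial f n)). rewrite bnorm_sub_sym.
    eapply Rle_lt_trans; [apply Hd; lia | apply Hb; auto].
Qed.


Lemma qnil_geom_scaled (c : A) B : 0 <= B -> qnil_geom c ->
  exists K, forall n, B ^ n * nrm (bpow c n) <= K * (/2) ^ n.
Proof.
  intros HB Hc.
  set (eps := / (2 * (B + 1))).
  assert (Heps : 0 < eps) by (apply Rinv_0_lt_compat; lra).
  assert (HBeps : B * eps <= / 2).
  { apply Rmult_le_reg_r with (2 * (B + 1)); [lra|].
    unfold eps. rewrite Rmult_assoc, Rinv_l by lra. lra. }
  destruct (Hc eps Heps) as [K HK]. pose proof (geom_bound_ge0 _ _ _ HK).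
  exists K. intros n.
  apply Rle_trans with (B ^ n * (K * eps ^ n)).
  { apply Rmult_le_compat_l; [apply pow_le; lra | apply HK]. }
  replace (B ^ n * (K * eps ^ n)) with (K * (B * eps) ^ n) by (rewrite Rpow_mult_distr; ring).
  apply Rmult_le_compat_l; [lra|]. apply pow_incr. split; [|lra].
  apply Rmult_le_pos; lra.
Qed.

Lemma qnil_geom_sub_nil (c r : A) : c ** r = bzero -> r ** r = bzero ->
  qnil_geom c -> qnil_geom (c --- r).
Proof.
  intros Hcr Hrr. apply qnil_geom_dominated with (1 + nrm r); [pose proof (bnorm_ge0 A r); lra|].
  assert (Hpow : forall n, bpow (c --- r) (S n) = bpow c (S n) --- r ** bpow c n).
  { induction n; [simpl; nr|].
    change (bpow (c --- r) (S (S n))) with ((c --- r) ** bpow (c --- r) (S n)). rewrite IHn.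
    change (bpow c (S (S n))) with (c ** bpow c (S n)).
    transitivity (c ** bpow c (S n) --- (c ** r) ** bpow c n --- r ** bpow c (S n)
       +++ (r ** r) ** bpow c n); [nr|].
    rewrite Hcr, Hrr. nr. }
  intros n. rewrite Hpow. unfold bsub.
  eapply Rle_trans; [apply bnorm_triangle|]. rewrite bnorm_opp.
  pose proof (bnorm_ge0 A r). pose proof (bnorm_ge0 A (bpow c n)).
  pose proof (bnorm_ge0 A (bpow c (S n))).
  pose proof (bnorm_submult A r (bpow c n)). nra.
Qed.

Section SpectralIdempotent.
Variables b bd : A.
Hypothesis Hbd : is_gdrazin b bd.

Local Notation e := (b ** bd).
Local Notation p := (spectral_idem b bd).

Lemma gdrazin_idem_idem : e ** e = e.
Proof.
  destruct Hbd as [_ [Hinv _]].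
  transitivity (b ** (bd ** (b ** bd))); [nr|]. now rewrite <- Hinv.
Qed.

Lemma gdrazin_idem_inv : e ** bd = bd.
Proof.
  destruct Hbd as [Hc [Hinv _]]. unfold commutes in Hc.
  rewrite Hc. transitivity (bd ** (b ** bd)); [nr|]. now rewrite <- Hinv.
Qed.

Lemma gdrazin_idem_comm : e ** b = b ** e.
Proof.
  destruct Hbd as [Hc _]. unfold commutes in Hc.
  transitivity (b ** (bd ** b)); [nr|]. now rewrite <- Hc.
Qed.

Lemma spectral_idem_mul_idem : p ** e = bzero.
Proof.
  unfold spectral_idem. transitivity (e --- e ** e); [nr|].
  rewrite gdrazin_idem_idem. nr.
Qed.

Lemma spectral_idem_idem : p ** p = p.
Proof.
  unfold spectral_idem. transitivity (bone --- e --- e +++ e ** e); [nr|].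
  rewrite gdrazin_idem_idem. nr.
Qed.

Lemma spectral_idem_mul_inv : p ** bd = bzero.
Proof.
  unfold spectral_idem. transitivity (bd --- e ** bd); [nr|].
  rewrite gdrazin_idem_inv. nr.
Qed.

Lemma spectral_idem_comm : p ** b = b ** p.
Proof.
  unfold spectral_idem. transitivity (b --- e ** b); [nr|].
  rewrite gdrazin_idem_comm. nr.
Qed.

Lemma qnil_geom_mul_spectral_idem : qnil_geom (b ** p).
Proof.
  destruct Hbd as [_ [_ Hq]]. apply qnil_geom_of_qnil.
  replace (b ** p) with (b --- bpow b 2 ** bd); [exact Hq|].
  unfold spectral_idem. simpl. nr.
Qed.


Section QuasiCommutingPerturbation.
Variables (lam : Cplx) (a : A).
Hypothesis Hlam : lam <> C0.
Hypothesis Ha : qnil a.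
Hypothesis Hab : a ** b = bscal A lam (b ** (a ** p)).

Local Notation x := (a +++ b).
Local Notation c := (p ** a +++ b ** p).

Lemma mul_gdrazin_idem0 : a ** e = bzero.
Proof.
  transitivity ((a ** b) ** bd); [nr|]. rewrite Hab, <- bscal_mull.
  transitivity (bscal A lam (b ** a ** (p ** bd))); [f_equal; nr|].
  rewrite spectral_idem_mul_inv. replace (b ** a ** bzero) with (bzero : A) by nr.
  apply bscal0.
Qed.

Lemma mul_gdrazin_inv0 : a ** bd = bzero.
Proof.
  rewrite <- gdrazin_idem_inv. transitivity ((a ** e) ** bd); [nr|].
  rewrite mul_gdrazin_idem0. nr.
Qed.

Lemma mul_spectral_idem : a ** p = a.
Proof.
  unfold spectral_idem. transitivity (a --- a ** e); [nr|].
  rewrite mul_gdrazin_idem0. nr.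
Qed.

Lemma spectral_idem_mul_add : p ** x = c.
Proof. transitivity (p ** a +++ p ** b); [nr|]. now rewrite spectral_idem_comm. Qed.

Lemma reduced_mul_spectral_idem : c ** p = c.
Proof.
  transitivity (p ** (a ** p) +++ b ** (p ** p)); [nr|].
  now rewrite mul_spectral_idem, spectral_idem_idem.
Qed.

Lemma spectral_idem_mul_pow n : p ** bpow x n = bpow c n ** p.
Proof.
  induction n; simpl; [nr|].
  transitivity ((p ** x) ** bpow x n); [nr|]. rewrite spectral_idem_mul_add.
  rewrite <- reduced_mul_spectral_idem at 1.
  transitivity (c ** (p ** bpow x n)); [nr|]. rewrite IHn. nr.
Qed.

Lemma mul_pow_add n : a ** bpow x n = a ** bpow c n ** p.
Proof.
  transitivity ((a ** p) ** bpow x n); [now rewrite mul_spectral_idem|].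
  transitivity (a ** (p ** bpow x n)); [nr|]. rewrite spectral_idem_mul_pow. nr.
Qed.

Lemma qnil_geom_spectral_idem_mul : qnil_geom (p ** a).
Proof.
  assert (Hpow : forall n, bpow (p ** a) (S n) = p ** bpow a (S n)).
  { induction n; [simpl; nr|].
    change (bpow (p ** a) (S (S n))) with ((p ** a) ** bpow (p ** a) (S n)). rewrite IHn.
    transitivity (p ** (a ** p) ** bpow a (S n)); [nr|]. rewrite mul_spectral_idem.
    simpl. nr. }
  apply qnil_geom_dominated with a (nrm p); [apply bnorm_ge0| |now apply qnil_geom_of_qnil].
  intros n. rewrite Hpow. eapply Rle_trans; [apply bnorm_submult|].
  pose proof (bnorm_ge0 A (bpow a n)). pose proof (bnorm_ge0 A p).
  pose proof (bnorm_ge0 A (bpow a (S n))). nra.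
Qed.

Lemma qcomm_spectral_parts : (p ** a) ** (b ** p) = bscal A lam ((b ** p) ** (p ** a)).
Proof.
  transitivity (p ** (a ** b) ** p); [nr|].
  rewrite Hab, <- bscal_mulr, <- bscal_mull. f_equal.
  transitivity (p ** b ** ((a ** p) ** p)); [nr|].
  rewrite spectral_idem_comm, !mul_spectral_idem.
  transitivity (b ** (p ** p) ** a); [now rewrite spectral_idem_idem | nr].
Qed.

Lemma qnil_geom_reduced : qnil_geom c.
Proof.
  apply qnil_geom_add_qcomm with lam; auto using qcomm_spectral_parts.
  - apply qnil_geom_spectral_idem_mul.
  - apply qnil_geom_mul_spectral_idem.
Qed.

Definition perturbation_term (n : nat) : A := bpow bd (n + 2) ** (a ** bpow x n).

Lemma perturbation_series_converges : exists s, bseries_sum perturbation_term s.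
Proof.
  set (B := nrm bd).
  assert (HB : 0 <= B) by apply bnorm_ge0.
  destruct (qnil_geom_scaled c B HB qnil_geom_reduced) as [K HK].
  apply bseries_geom with (nrm bone * B ^ 2 * nrm a * nrm p * K). intros n.
  unfold perturbation_term. rewrite mul_pow_add.
  eapply Rle_trans; [apply bnorm_submult|].
  pose proof (bnorm_ge0 A bone). pose proof (bnorm_ge0 A a). pose proof (bnorm_ge0 A p).
  pose proof (bnorm_ge0 A (bpow c n)). pose proof (pow_le B 2 HB).
  eapply Rle_trans.
  { apply Rmult_le_compat; try apply bnorm_ge0; [apply bnorm_pow | apply bnorm_mul3]. }
  fold B. rewrite pow_add.
  apply Rle_trans with ((nrm bone * B ^ 2 * nrm a * nrm p) * (B ^ n * nrm (bpow c n)));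
    [right; ring|].
  rewrite (Rmult_assoc _ K).
  apply Rmult_le_compat_l; [repeat apply Rmult_le_pos; lra | apply HK].
Qed.

Lemma add_mul_gdrazin_inv : x ** bd = e.
Proof. transitivity (a ** bd +++ b ** bd); [nr|]. rewrite mul_gdrazin_inv0. nr. Qed.

Lemma gdrazin_inv_mul_add : bd ** x = bd ** a +++ e.
Proof.
  destruct Hbd as [Hc _]. unfold commutes in Hc.
  transitivity (bd ** a +++ bd ** b); [nr|]. now rewrite <- Hc.
Qed.

Lemma add_mul_gdrazin_idem : x ** e = e ** b.
Proof.
  transitivity (a ** e +++ b ** e); [nr|].
  rewrite mul_gdrazin_idem0, gdrazin_idem_comm. nr.
Qed.

Section PerturbationSeries.
Variable s : A.
Hypothesis Hs : bseries_sum perturbation_term s.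

Lemma series_mul_spectral_idem : s ** p = s.
Proof.
  apply (bseries_sum_unique perturbation_term); [|exact Hs].
  apply (bseries_sum_ext (fun k => perturbation_term k ** p)); [|now apply bseries_sum_mulr].
  intros k. unfold perturbation_term. rewrite mul_pow_add.
  transitivity (bpow bd (k + 2) ** (a ** bpow c k ** (p ** p))); [nr|].
  now rewrite spectral_idem_idem.
Qed.

Lemma gdrazin_idem_mul_series : e ** s = s.
Proof.
  apply (bseries_sum_unique perturbation_term); [|exact Hs].
  apply (bseries_sum_ext (fun k => e ** perturbation_term k)); [|now apply bseries_sum_mull].
  intros k. unfold perturbation_term. replace (k + 2)%nat with (S (k + 1)) by lia.
  simpl bpow. transitivity ((e ** bd) ** bpow bd (k + 1) ** (a ** bpow x k)); [nr|].
  rewrite gdrazin_idem_inv. nr.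
Qed.

Lemma mul_series0 : a ** s = bzero.
Proof.
  rewrite <- gdrazin_idem_mul_series. transitivity ((a ** e) ** s); [nr|].
  rewrite mul_gdrazin_idem0. nr.
Qed.

Lemma series_mul_gdrazin_idem0 : s ** e = bzero.
Proof.
  rewrite <- series_mul_spectral_idem. transitivity (s ** (p ** e)); [nr|].
  rewrite spectral_idem_mul_idem. nr.
Qed.

Lemma series_mul_gdrazin_inv0 : s ** bd = bzero.
Proof.
  rewrite <- series_mul_spectral_idem. transitivity (s ** (p ** bd)); [nr|].
  rewrite spectral_idem_mul_inv. nr.
Qed.

Lemma series_mul_series0 : s ** s = bzero.
Proof.
  transitivity (s ** p ** (e ** s));
    [now rewrite gdrazin_idem_mul_series, series_mul_spectral_idem|].
  transitivity (s ** (p ** e) ** s); [nr|]. rewrite spectral_idem_mul_idem. nr.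
Qed.

(* Telescoping, with T = perturbation_term: [x T_k = bd^(k+1) a x^k = T_(k-1) x], the [k = 0] term being [bd a]. *)
Lemma add_mul_series : x ** s = bd ** a +++ s ** x.
Proof.
  set (U := fun k => bpow bd (S k) ** (a ** bpow x k)).
  assert (HxT : forall k, x ** perturbation_term k = U k).
  { intros k. unfold perturbation_term, U. replace (k + 2)%nat with (S (S k)) by lia.
    simpl bpow. transitivity ((x ** bd) ** (bd ** bpow bd k ** (a ** bpow x k))); [nr|].
    rewrite add_mul_gdrazin_inv.
    transitivity ((e ** bd) ** bpow bd k ** (a ** bpow x k)); [nr|].
    rewrite gdrazin_idem_inv. nr. }
  assert (HTx : forall k, perturbation_term k ** x = U (S k)).
  { intros k. unfold perturbation_term, U. replace (k + 2)%nat with (S (S k)) by lia.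
    rewrite (bpow_Sr x k). nr. }
  apply (bconverges_unique (fun n => x ** bpartial perturbation_term (S n))).
  - apply (bconverges_shift (fun n => x ** bpartial perturbation_term n)).
    now apply bconverges_mull.
  - apply bconverges_ext with (fun n => bd ** a +++ bpartial perturbation_term n ** x).
    + intros n. rewrite bpartial_mulr, bpartial_mull.
      rewrite (bpartial_ext _ _ (S n) HxT), (bpartial_ext _ _ n HTx), bpartial_shift.
      f_equal. unfold U. simpl. nr.
    + apply bconverges_addl, bconverges_mulr, Hs.
Qed.

Lemma commutes_add_gdrazin : commutes x (bd +++ s).
Proof.
  unfold commutes.
  transitivity (x ** bd +++ x ** s); [nr|].
  rewrite add_mul_series, add_mul_gdrazin_inv.
  transitivity (bd ** x +++ s ** x); [rewrite gdrazin_inv_mul_add; nr | nr].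
Qed.

Lemma gdrazin_add_inner : bd +++ s = (bd +++ s) ** (x ** (bd +++ s)).
Proof.
  symmetry. transitivity ((bd +++ s) ** x ** (bd +++ s)); [nr|].
  rewrite <- commutes_add_gdrazin.
  transitivity ((x ** bd +++ x ** s) ** (bd +++ s)); [nr|].
  rewrite add_mul_gdrazin_inv, add_mul_series.
  transitivity (e ** bd +++ e ** s +++ bd ** (a ** bd) +++ bd ** (a ** s)
     +++ s ** (x ** bd) +++ s ** (x ** s)); [nr|].
  rewrite gdrazin_idem_inv, gdrazin_idem_mul_series, mul_gdrazin_inv0, mul_series0,
    add_mul_gdrazin_inv, series_mul_gdrazin_idem0, add_mul_series.
  transitivity (bd +++ s +++ (s ** bd) ** a +++ (s ** s) ** x); [nr|].
  rewrite series_mul_gdrazin_inv0, series_mul_series0. nr.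
Qed.

Local Notation r := (bd ** a ** x +++ s ** (x ** x)).

Lemma add_sub_sq_mul_gdrazin : x --- bpow x 2 ** (bd +++ s) = c --- r.
Proof.
  transitivity (x --- x ** (x ** bd +++ x ** s)); [simpl; nr|].
  rewrite add_mul_gdrazin_inv, add_mul_series.
  transitivity (x --- (x ** e +++ (x ** bd) ** a +++ (x ** s) ** x)); [nr|].
  rewrite add_mul_gdrazin_inv, add_mul_series, add_mul_gdrazin_idem.
  unfold spectral_idem. rewrite gdrazin_idem_comm. nr.
Qed.

Lemma gdrazin_idem_mul_corr : e ** r = r.
Proof.
  transitivity ((e ** bd) ** a ** x +++ (e ** s) ** (x ** x)); [nr|].
  now rewrite gdrazin_idem_inv, gdrazin_idem_mul_series.
Qed.

Lemma corr_mul_gdrazin_idem0 : r ** e = bzero.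
Proof.
  transitivity (bd ** a ** (x ** e) +++ s ** x ** (x ** e)); [nr|].
  rewrite add_mul_gdrazin_idem.
  transitivity (bd ** (a ** e) ** b +++ s ** (x ** e) ** b); [nr|].
  rewrite mul_gdrazin_idem0, add_mul_gdrazin_idem.
  transitivity ((s ** e) ** b ** b); [nr|]. rewrite series_mul_gdrazin_idem0. nr.
Qed.

Lemma corr_sq0 : r ** r = bzero.
Proof.
  rewrite <- gdrazin_idem_mul_corr at 2.
  transitivity ((r ** e) ** r); [nr|]. rewrite corr_mul_gdrazin_idem0. nr.
Qed.

Lemma reduced_mul_corr0 : c ** r = bzero.
Proof.
  rewrite <- reduced_mul_spectral_idem, <- gdrazin_idem_mul_corr.
  transitivity (c ** (p ** e) ** r); [nr|]. rewrite spectral_idem_mul_idem. nr.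
Qed.

Lemma is_gdrazin_add : is_gdrazin x (bd +++ s).
Proof.
  split; [exact commutes_add_gdrazin|]. split; [exact gdrazin_add_inner|].
  rewrite add_sub_sq_mul_gdrazin. apply qnil_of_qnil_geom, qnil_geom_sub_nil.
  - exact reduced_mul_corr0.
  - exact corr_sq0.
  - exact qnil_geom_reduced.
Qed.

End PerturbationSeries.
End QuasiCommutingPerturbation.
End SpectralIdempotent.

End BanachAlgebraTheory.

Theorem lemma2p3 (A : BanachAlgebra) (lam : Cplx) (a b bd : A) :
  lam <> C0 ->
  qnil a ->
  is_gdrazin b bd ->
  bmul A a b = bscal A lam (bmul A b (bmul A a (spectral_idem b bd))) ->
  gdrazin_invertible (badd A a b) /\
  exists S : A,
    bseries_sum (fun n => bmul A (bpow bd (n + 2)) (bmul A a (bpow (badd A a b) n))) S /\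
    is_gdrazin (badd A a b) (badd A bd S).
Proof.
  intros Hlam Ha Hbd Hab.
  destruct (perturbation_series_converges _ _ _ Hbd _ _ Hlam Ha Hab) as [s Hs].
  pose proof (is_gdrazin_add _ _ _ Hbd _ _ Hlam Ha Hab _ Hs) as Hgd.
  split; [now exists (badd A bd s) | now exists s].
Qed.
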